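(* Let $m\ge 2$, let $D_m=\langle r,s\mid r^m=e,\ s^2=e,\ srs=r^{-1}\rangle$, let $\mathcal I=\{sr^k: 0\le k<m\}$ be its set of reflections, and let $H$ be an abelian group. (I) If $m$ is odd, then $D_m=\langle\mathcal I\rangle$ and for every $a,b\in\mathcal I$ there exists $t\in D_m$ with $t^2=ab$; consequently $S_1(D_m,H)=S_{1,2}(D_m,H)=\mathrm{Hom}(D_m,H)$. (II) If $m$ is even, this square-root property may fail: for example, in $D_4$ the product $s\cdot(sr)=r$ of two reflections is not a square in $D_4$.
   Context: $H$ is written additively. For a group $G$ with identity $e$, $S_1(G,H)$ is the set of $f:G\to H$ with $f(e)=0$ and $f(xy)+f(xy^{-1})=2f(x)$ for all $x,y\in G$; $S_{1,2}(G,H)$ is the subset of those also satisfying $f(xy)+f(x^{-1}y)=2f(y)$ for all $x,y\in G$. *)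

From HB Require Import structures.
From mathcomp Require Import all_boot all_order all_algebra all_fingroup.
Set Implicit Arguments. Unset Strict Implicit. Unset Printing Implicit Defensive.
Import GRing.Theory.

(* We realize it inside an arbitrary finite group gT as the
   subgroup generated by r and s, where r, s satisfy the defining relations
   and the generated subgroup has order 2m (so it is isomorphic to the
   presented group, which has order 2m). *)
Definition dihedral_pres (m : nat) (gT : finGroupType) (r s : gT) : Prop :=
  [/\ (r ^+ m = 1)%g, (s ^+ 2 = 1)%g, (s * r * s = r^-1)%g
    & #|<<[set r; s]>>%g| = m.*2].

Definition Dih (gT : finGroupType) (r s : gT) : {group gT} :=
  <<[set r; s]>>%G.

Definition reflections (m : nat) (gT : finGroupType) (r s : gT) : {set gT} :=
  [set (s * r ^+ k)%g | k : 'I_m].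

Definition S_1 (gT : finGroupType) (G : {set gT}) (H : zmodType) (f : gT -> H)
  : Prop :=
  f 1%g = 0%R /\
  (forall x y, x \in G -> y \in G ->
     (f (x * y)%g + f (x * y^-1)%g = f x *+ 2)%R).

Definition S_12 (gT : finGroupType) (G : {set gT}) (H : zmodType) (f : gT -> H)
  : Prop :=
  S_1 G f /\
  (forall x y, x \in G -> y \in G ->
     (f (x * y)%g + f (x^-1 * y)%g = f y *+ 2)%R).

Definition HomGrp (gT : finGroupType) (G : {set gT}) (H : zmodType) (f : gT -> H)
  : Prop :=
  forall x y, x \in G -> y \in G -> f (x * y)%g = (f x + f y)%R.

(* The rotations form the cyclic subgroup <[r]> of index 2, and the product
   of the reflections s r^i and s r^j is the rotation r^(j-i).  When m is odd,
   every rotation u is the square of the rotation u^((m+1)/2).  For f in S_1,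
   taking x = y gives f(x^2) = 2 f(x); so f is 2-torsion on the reflections
   (which square to 1), hence on the rotations (as f(u s) + f(u s^-1) = 2 f(u)),
   and vanishes on the rotations since they are squares of rotations.  Applying
   the S_1 equation to x = w s, y = w^-1 then shows that f is constant on the
   reflections, so f is the homomorphism x |-> [x 
otin <[r]>] f(s).
   When m is even, r^(2i) = r would force 2i = 1 mod m, and a reflection
   squares to 1, so r is not a square. *)

From mathcomp Require Import all_boot all_order all_algebra all_fingroup all_solvable.
Set Implicit Arguments. Unset Strict Implicit. Unset Printing Implicit Defensive.
Import GRing.Theory.
Local Open Scope group_scope.

Section S1Basics.
Variables (gT : finGroupType) (G : {group gT}) (H : zmodType) (f : gT -> H).

Lemma S_1_expg2 : S_1 G f -> {in G, forall x, f (x ^+ 2) = (f x *+ 2)%R}.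
Proof. by case=> f1 fG x Gx; rewrite -(fG x x) // mulgV f1 addr0. Qed.

Lemma S_1_involution x :
  S_1 G f -> x \in G -> x ^+ 2 = 1 -> (f x *+ 2 = 0)%R.
Proof.
by move=> fS1 Gx x2; rewrite -(S_1_expg2 fS1 Gx) x2; case: fS1.
Qed.

Lemma HomGrp_S_12 : HomGrp G f -> S_12 G f.
Proof.
move=> fM.
have f1 : f 1 = 0%R by apply: (addrI (f 1)); rewrite addr0 -fM ?mulg1.
have fV y : y \in G -> f y^-1 = (- f y)%R.
  by move=> Gy; apply: (addrI (f y)); rewrite -fM ?groupV // mulgV f1 subrr.
do ![split] => // x y Gx Gy; rewrite !fM ?groupV // fV // addrACA subrr.
  by rewrite addr0 mulr2n.
by rewrite add0r mulr2n.
Qed.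

End S1Basics.

Lemma expg_odd_sqrt (gT : finGroupType) (u : gT) m :
  odd m -> u ^+ m = 1 -> (u ^+ (m.+1)./2) ^+ 2 = u.
Proof.
move=> m_odd um; rewrite -expgM muln2 even_halfK /= ?m_odd //.
by rewrite expgS um mulg1.
Qed.

Section Dihedral.
Variables (gT : finGroupType) (r s : gT).

Lemma mem_Dih_r : r \in Dih r s.
Proof. by rewrite mem_gen // !inE eqxx. Qed.

Lemma mem_Dih_s : s \in Dih r s.
Proof. by rewrite mem_gen // !inE eqxx orbT. Qed.

Lemma mem_Dih_cycle u : u \in <[r]> -> u \in Dih r s.
Proof. by apply/subsetP; rewrite cycle_subG mem_Dih_r. Qed.

Lemma mem_reflections m k : k < m -> s * r ^+ k \in reflections m r s.
Proof. by move=> lt_k_m; apply/imsetP; exists (Ordinal lt_k_m). Qed.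

Lemma reflections_sub_Dih m : reflections m r s \subset Dih r s.
Proof.
by apply/subsetP=> _ /imsetP[k _ ->]; rewrite groupM ?groupX ?mem_Dih_s ?mem_Dih_r.
Qed.

Hypotheses (s2 : s ^+ 2 = 1) (srs : s * r * s = r^-1).

Lemma invg_s : s^-1 = s.
Proof. by apply/eqP; rewrite eq_invg_mul -expg2 s2. Qed.

Lemma conjg_cycle u : u \in <[r]> -> u ^ s = u^-1.
Proof.
case/cycleP=> i ->; rewrite conjXg conjgE invg_s mulgA srs.
by rewrite expVgn.
Qed.

Lemma mulg_s_cycle u : u \in <[r]> -> s * u = u^-1 * s.
Proof.
by move/conjg_cycle; rewrite conjgE invg_s => <-; rewrite -!mulgA -expg2 s2 mulg1.
Qed.

Lemma reflection_expg2 u : u \in <[r]> -> (u * s) ^+ 2 = 1.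
Proof.
move=> ru; rewrite expg2 mulgA -(mulgA u) mulg_s_cycle //.
by rewrite mulgA mulgV mul1g -expg2.
Qed.

Lemma Dih_mulE : Dih r s = <[r]> * <[s]> :> {set gT}.
Proof.
have sN : <[s]> \subset 'N(<[r]>).
  by rewrite cycle_subG; apply/normP; rewrite -cycleJ conjg_cycle ?cycle_id ?cycleV.
by rewrite -norm_joinEr // joing_idl joing_idr.
Qed.

Lemma DihP x : x \in Dih r s -> exists2 u, u \in <[r]> & x = u \/ x = u * s.
Proof.
rewrite Dih_mulE; case/mulsgP=> u v ru /cycleP[i ->] ->; exists u => //.
rewrite -(expg_mod _ s2); have : i %% 2 < 2 by rewrite ltn_mod.
by case: (i %% 2) => [|[|//]] _; [left; rewrite mulg1 | right; rewrite expg1].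
Qed.

Lemma mulg_reflections_cycle m a b :
  a \in reflections m r s -> b \in reflections m r s -> a * b \in <[r]>.
Proof.
case/imsetP=> i _ ->; case/imsetP=> j _ ->.
rewrite mulg_s_cycle ?mem_cycle // -mulgA [s * (s * _)]mulgA -expg2 s2 mul1g.
by rewrite groupM ?groupV ?mem_cycle.
Qed.

Lemma Dih_gen_reflections m : 1 < m -> Dih r s = <<reflections m r s>>%G.
Proof.
move=> lt1m; apply: val_inj; apply/eqP.
rewrite eqEsubset andbC gen_subG reflections_sub_Dih /=.
have sI : s \in reflections m r s.
  by have := @mem_reflections m 0 (ltnW lt1m); rewrite mulg1.
have srI : s * r \in reflections m r s by apply: (@mem_reflections m 1).
rewrite gen_subG subUset !sub1set (mem_gen sI) andbT.
by have := groupM (mem_gen sI) (mem_gen srI); rewrite mulgA -expg2 s2 mul1g.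
Qed.

Section OddDihedral.
Variable m : nat.
Hypotheses (m_odd : odd m) (rm : r ^+ m = 1).

Lemma cycle_sqrt u : u \in <[r]> -> exists2 w, w \in <[r]> & w ^+ 2 = u.
Proof.
move=> ru; exists (u ^+ (m.+1)./2); first exact: groupX.
by apply: expg_odd_sqrt => //; case/cycleP: ru => i ->; rewrite expgnAC rm expg1n.
Qed.

Lemma reflections_mul_sqrt a b :
  a \in reflections m r s -> b \in reflections m r s ->
  exists2 t, t \in Dih r s & t ^+ 2 = a * b.
Proof.
move=> Ia Ib; have [w rw <-] := cycle_sqrt (mulg_reflections_cycle Ia Ib).
by exists w; first exact: mem_Dih_cycle.
Qed.

Section S1.
Variables (H : zmodType) (f : gT -> H).
Hypothesis fS1 : S_1 (Dih r s) f.

Lemma S_1_reflection_2torsion u : u \in <[r]> -> (f (u * s) *+ 2 = 0)%R.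
Proof.
move=> ru; apply: S_1_involution fS1 _ (reflection_expg2 ru).
by rewrite groupM ?mem_Dih_s ?mem_Dih_cycle.
Qed.

Lemma S_1_s_2torsion : (f s *+ 2 = 0)%R.
Proof. by have := S_1_reflection_2torsion (group1 _); rewrite mul1g. Qed.

Lemma S_1_cycle_eq0 u : u \in <[r]> -> f u = 0%R.
Proof.
move=> ru; have [w rw <-] := cycle_sqrt ru; have Dw := mem_Dih_cycle rw.
have [_ fD] := fS1; rewrite (S_1_expg2 fS1 Dw) -(fD w s) ?mem_Dih_s //.
by rewrite invg_s -mulr2n S_1_reflection_2torsion.
Qed.

Lemma S_1_reflection_eq u : u \in <[r]> -> f (u * s) = f s.
Proof.
move=> ru; have [w rw <-] := cycle_sqrt ru; have Dw := mem_Dih_cycle rw.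
have [_ fD] := fS1.
have := fD (w * s) w^-1 (groupM Dw mem_Dih_s) (groupVr Dw).
rewrite S_1_reflection_2torsion // invgK -!mulgA mulg_s_cycle ?groupV // invgK.
rewrite mulg_s_cycle // mulgA -expg2 mulgA mulgV mul1g => fws.
by apply: (addIr (f s)); rewrite fws -mulr2n S_1_s_2torsion.
Qed.

Lemma S_1_Dih_HomGrp : HomGrp (Dih r s) f.
Proof.
move=> x y /DihP[u ru [->|->]] /DihP[v rv [->|->]].
- by rewrite !S_1_cycle_eq0 ?groupM // addr0.
- by rewrite mulgA !S_1_reflection_eq ?groupM // (S_1_cycle_eq0 ru) add0r.
- rewrite -mulgA mulg_s_cycle // mulgA !S_1_reflection_eq ?groupM ?groupV //.
  by rewrite (S_1_cycle_eq0 rv) addr0.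
- rewrite mulgA -(mulgA u) mulg_s_cycle // mulgA -mulgA -expg2 s2 mulg1.
  rewrite S_1_cycle_eq0 ?groupM ?groupV // !S_1_reflection_eq //.
  by rewrite -mulr2n S_1_s_2torsion.
Qed.

End S1.
End OddDihedral.
End Dihedral.

Lemma order_dihedral_pres (gT : finGroupType) (r s : gT) m :
  dihedral_pres m r s -> #[r] = m.
Proof.
case=> rm s2 srs card_D; have {}card_D : #|Dih r s| = m.*2 := card_D.
have m_gt0 : 0 < m by rewrite -double_gt0 -card_D cardG_gt0.
have le_r_m : #[r] <= m by apply: dvdn_leq => //; rewrite order_dvdn rm.
have le_s_2 : #[s] <= 2 by apply: dvdn_leq => //; rewrite order_dvdn s2.
have card_D_le : m.*2 <= #[r] * #[s].
  by rewrite -card_D (Dih_mulE s2 srs) /order mul_cardG leq_pmulr ?cardG_gt0.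
apply/eqP; rewrite eqn_leq le_r_m -leq_double (leq_trans card_D_le) //.
by rewrite -muln2 leq_mul2l le_s_2 orbT.
Qed.

Lemma dihedral_even_no_sqrt (gT : finGroupType) (r s : gT) m :
  ~~ odd m -> dihedral_pres m r s -> ~ exists2 t, t \in Dih r s & t ^+ 2 = r.
Proof.
move=> m_even Dm; have [_ s2 srs _] := Dm; have ord_r := order_dihedral_pres Dm.
case=> t /(DihP s2 srs)[u /cycleP[i ->] [->|->]].
  rewrite -expgM => /eqP; rewrite -{2}[r]expg1 eq_expg_mod_order ord_r => /eqP.
  by move/(congr1 (modn^~ 2)); rewrite !modn_dvdm ?dvdn2 // modnMl.
rewrite (reflection_expg2 s2 srs) ?mem_cycle // => r1.
by move: ord_r m_even; rewrite -r1 order1 => <-.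
Qed.

Theorem mainTheorem8 :
  (* (I) m odd *)
  (forall (m : nat) (gT : finGroupType) (r s : gT),
     2 <= m -> odd m -> dihedral_pres m r s ->
     [/\ Dih r s = <<reflections m r s>>%G,
         (forall a b, a \in reflections m r s -> b \in reflections m r s ->
            exists2 t, t \in Dih r s & (t ^+ 2 = a * b)%g)
       & forall (H : zmodType) (f : gT -> H),
           (S_1 (Dih r s) f <-> HomGrp (Dih r s) f) /\
           (S_12 (Dih r s) f <-> HomGrp (Dih r s) f)]) /\
  (* (II) the example in D_4 *)
  (forall (gT : finGroupType) (r s : gT),
     dihedral_pres 4 r s ->
     [/\ s \in reflections 4 r s, (s * r)%g \in reflections 4 r s,
         (s * (s * r))%g = r
       & ~ exists2 t, t \in Dih r s & (t ^+ 2)%g = r]).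
Proof.
split=> [m gT r s lt1m m_odd [rm s2 srs _] | gT r s D4].
  split.
  - exact: Dih_gen_reflections.
  - exact: reflections_mul_sqrt.
  - move=> H f; have S_1_hom := S_1_Dih_HomGrp s2 srs m_odd rm (f := f).
    have hom_S_12 := @HomGrp_S_12 _ (Dih r s) H f.
    split; split.
    + exact: S_1_hom.
    + by case/hom_S_12.
    + by case=> /S_1_hom.
    + exact: hom_S_12.
have [_ s2 _ _] := D4; split.
- by have := @mem_reflections _ r s 4 0 isT; rewrite mulg1.
- exact: (@mem_reflections _ r s 4 1).
- by rewrite mulgA -expg2 s2 mul1g.
- exact: dihedral_even_no_sqrt D4.
Qed.
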